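(* Let $\mathcal{L}\in\mathbb{R}^{N_1\times N_2\times N_3}$ be any tensor. Then $$\frac{\mathrm{inc}(\mathcal{L})}{\sqrt{N_3}}\le\xi(\mathcal{L})\le 2\,\mathrm{inc}(\mathcal{L}).$$
   Context: For $\mathcal{A}\in\mathbb{R}^{N_1\times N_2\times N_3}$ write $A^{(k)}=\mathcal{A}(:,:,k)$ for its frontal slices. $\mathrm{bcirc}(\mathcal{A})\in\mathbb{R}^{N_1N_3\times N_2N_3}$ is the block circulant matrix whose $(i,j)$ block is $A^{(((i-j)\bmod N_3)+1)}$; $\mathrm{unfold}$ stacks the frontal slices vertically, $\mathrm{fold}$ is its inverse, and the t-product is $\mathcal{A}*\mathcal{B}=\mathrm{fold}(\mathrm{bcirc}(\mathcal{A})\,\mathrm{unfold}(\mathcal{B}))$. The transpose $\mathcal{A}^\top$ transposes each frontal slice and reverses the order of slices $2,\dots,N_3$. The identity tensor has first frontal slice the identity and other slices zero; f-diagonal means every frontal slice is diagonal. Every $\mathcal{L}$ of tubal rank $R$ has a skinny t-SVD $\mathcal{L}=\mathcal{U}*\mathcal{S}*\mathcal{V}^\top$ with $\mathcal{U}\in\mathbb{R}^{N_1\times R\times N_3}$, $\mathcal{V}\in\mathbb{R}^{N_2\times R\times N_3}$, $\mathcal{U}^\top*\mathcal{U}=\mathcal{V}^\top*\mathcal{V}=\mathcal{I}$, $\mathcal{S}$ f-diagonal. Tensor spectral norm $\|\mathcal{A}\|=\|\mathrm{bcirc}(\mathcal{A})\|$; $\|\cdot\|_\infty$, $\|\cdot\|_F$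 are the entrywise max-absolute-value and Frobenius norms. $T(\mathcal{L})=\{\mathcal{U}*\mathcal{Y}^\top+\mathcal{W}*\mathcal{V}^\top:\mathcal{Y}\in\mathbb{R}^{N_2\times R\times N_3},\mathcal{W}\in\mathbb{R}^{N_1\times R\times N_3}\}$ and $\xi(\mathcal{L})=\max_{\mathcal{N}\in T(\mathcal{L}),\|\mathcal{N}\|\le1}\|\mathcal{N}\|_\infty$. For $N\in\{N_1,N_2\}$ and $1\le n\le N$, let $\mathring{e}_n\in\mathbb{R}^{N\times1\times N_3}$ be the tensor with $(n,1,1)$ entry $1$ and all other entries $0$. With $\mathcal{P}_{\mathcal{U}}=\mathcal{U}*\mathcal{U}^\top$ and $\mathcal{P}_{\mathcal{V}}=\mathcal{V}*\mathcal{V}^\top$ (projections onto $\mathrm{span}(\mathcal{U})$, $\mathrm{span}(\mathcal{V})$), set $\beta(\mathrm{span}(\mathcal{U}))=\max_{1\le n\le N_1}\|\mathcal{P}_{\mathcal{U}}*\mathring{e}_n\|_F$, $\beta(\mathrm{span}(\mathcal{V}))=\max_{1\le n\le N_2}\|\mathcal{P}_{\mathcal{V}}*\mathring{e}_n\|_F$, and $\mathrm{inc}(\mathcal{L})=\max\{\beta(\mathrm{span}(\mathcal{U})),\beta(\mathrm{span}(\mathcal{V}))\}$. *)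

From HB Require Import structures.
From mathcomp Require Import all_boot all_order all_algebra.
From mathcomp Require Import all_classical reals.
Set Implicit Arguments. Unset Strict Implicit. Unset Printing Implicit Defensive.
Import Order.TTheory GRing.Theory Num.Theory.
Local Open Scope ring_scope.
Local Open Scope classical_set_scope.

Lemma osub_proof n (k j : 'I_n) : ((k + (n - j)) %% n < n)%N.
Proof. apply: ltn_pmod; exact: (leq_ltn_trans (leq0n _) (ltn_ord k)). Qed.
Definition osub n (k j : 'I_n) : 'I_n := Ordinal (osub_proof k j).

Lemma oneg_proof n (k : 'I_n) : ((n - k) %% n < n)%N.
Proof. apply: ltn_pmod; exact: (leq_ltn_trans (leq0n _) (ltn_ord k)). Qed.
Definition oneg n (k : 'I_n) : 'I_n := Ordinal (oneg_proof k).

Section Tensors.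
Variable R : realType.

(* A tensor in R^{n1 x n2 x n3}, given by its frontal slices A^(k), k < n3
   (0-based: slice k here is slice k+1 of the paper). *)
Definition tensor (n1 n2 n3 : nat) := {ffun 'I_n3 -> 'M[R]_(n1, n2)}.

(* bcirc(A): block (i,j) is A^((i-j) mod n3); rows indexed by (block, row),
   columns by (block, column). *)
Definition bcirc n1 n2 n3 (A : tensor n1 n2 n3)
  : 'I_n3 * 'I_n1 -> 'I_n3 * 'I_n2 -> R :=
  fun p q => A (osub p.1 q.1) p.2 q.2.

(* t-product: fold(bcirc(A) unfold(B)), whose k-th slice is
   sum_j A^((k-j) mod n3) B^(j). *)
Definition tprod n1 n2 n4 n3 (A : tensor n1 n2 n3) (B : tensor n2 n4 n3)
  : tensor n1 n4 n3 :=
  [ffun k => \sum_(j < n3) A (osub k j) *m B j].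

(* transpose: transpose each slice and reverse slices 2..n3 *)
Definition ttr n1 n2 n3 (A : tensor n1 n2 n3) : tensor n2 n1 n3 :=
  [ffun k => (A (oneg k))^T].

Definition tid r n3 : tensor r r n3 :=
  [ffun k : 'I_n3 => if val k == 0%N then 1%:M else 0].

Definition fdiag r1 r2 n3 (S : tensor r1 r2 n3) : Prop :=
  forall k (i : 'I_r1) (j : 'I_r2), (val i != val j) -> S k i j = 0.

Definition vnorm2 (J : finType) (x : J -> R) : R :=
  Num.sqrt (\sum_(j : J) x j ^+ 2).

Definition opnorm (I J : finType) (M : I -> J -> R) : R :=
  sup [set vnorm2 (fun i => \sum_(j : J) M i j * x j) |
         x in [set x : J -> R | vnorm2 x <= 1]].

Definition tspec n1 n2 n3 (A : tensor n1 n2 n3) : R := opnorm (bcirc A).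

Definition tinf n1 n2 n3 (A : tensor n1 n2 n3) : R :=
  \big[Num.max/0]_(k < n3) \big[Num.max/0]_(i < n1) \big[Num.max/0]_(j < n2)
    `|A k i j|.

Definition tfrob n1 n2 n3 (A : tensor n1 n2 n3) : R :=
  Num.sqrt (\sum_(k < n3) \sum_(i < n1) \sum_(j < n2) A k i j ^+ 2).

Definition tangent n1 n2 n3 r (U : tensor n1 r n3) (V : tensor n2 r n3)
  : set (tensor n1 n2 n3) :=
  [set N | exists (Y : tensor n2 r n3) (W : tensor n1 r n3),
      N = [ffun k => tprod U (ttr Y) k + tprod W (ttr V) k]].

Definition xi n1 n2 n3 r (U : tensor n1 r n3) (V : tensor n2 r n3) : R :=
  sup [set tinf N | N in [set N | tangent U V N /\ tspec N <= 1]].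

Definition ebasis N n3 (n : 'I_N) : tensor N 1 n3 :=
  [ffun k : 'I_n3 => if val k == 0%N then delta_mx n ord0 else 0].

Definition proj N r n3 (U : tensor N r n3) : tensor N N n3 := tprod U (ttr U).

Definition beta N r n3 (U : tensor N r n3) : R :=
  \big[Num.max/0]_(n < N) tfrob (tprod (proj U) (ebasis n3 n)).

Definition inc n1 n2 n3 r (U : tensor n1 r n3) (V : tensor n2 r n3) : R :=
  Num.max (beta U) (beta V).

End Tensors.

From Pilot Require Import Defs.
From HB Require Import structures.
From mathcomp Require Import all_boot all_order all_algebra.
From mathcomp Require Import all_classical reals.
From mathcomp Require Import ring.
Import Order.TTheory GRing.Theory Num.Theory.
Set Implicit Arguments. Unset Strict Implicit. Unset Printing Implicit Defensive.
Local Open Scope ring_scope.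
Local Open Scope classical_set_scope.

(* Flattening by bcirc turns the t-product into the matrix product and the
   tensor transpose into the matrix transpose, so the orthonormality of U and
   V makes P = bcirc(U) bcirc(U)^T and Q = bcirc(V) bcirc(V)^T orthogonal
   projections.  By circulant symmetry, column (k, i) of P has norm
   beta_i = ||P_U * e_i||_F for every k.
   Upper bound: every N in T(L) satisfies N = P N + (I - P) N Q, so by
   Cauchy-Schwarz |N_ab| <= ||P e_a|| ||N e_b|| + ||(I - P) e_a|| ||N Q e_b||,
   which is at most ||P e_a|| + ||Q e_b|| when ||N|| <= 1.
   Lower bound: with E_ab the tensor whose only nonzero entry is (a, b, 1),
   both c P_U * E_ab and c E_ba * P_V lie in T(L).  bcirc of the first has
   Frobenius norm sqrt(N3) c beta_a, so c = 1 / (sqrt(N3) beta_a) gives it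
   spectral norm at most 1, while its (a, b) entry is c (P_U)_aa
   = c beta_a^2 = beta_a / sqrt(N3). *)

Section FiniteMatrices.
Variable R : realType.
Implicit Types I J K : finType.

Definition mm I J K (M : I -> J -> R) (N : J -> K -> R) : I -> K -> R :=
  fun i k => \sum_j M i j * N j k.
Definition trm I J (M : I -> J -> R) : J -> I -> R := fun j i => M i j.
Definition idm I : I -> I -> R := fun i j => (i == j)%:R.
Definition mv I J (M : I -> J -> R) (x : J -> R) : I -> R :=
  fun i => \sum_j M i j * x j.

Lemma mmA I J K (L : finType) (A : I -> J -> R) (B : J -> K -> R)
    (C : K -> L -> R) :
  mm (mm A B) C = mm A (mm B C).
Proof.
apply/funext => i; apply/funext => l; rewrite /mm.
under eq_bigr do rewrite big_distrl /=.
rewrite exchange_big; apply: eq_bigr => j _; rewrite big_distrr /=.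
by apply: eq_bigr => k _; rewrite mulrA.
Qed.

Lemma mmDl I J K (A B : I -> J -> R) (C : J -> K -> R) :
  mm (A + B) C = mm A C + mm B C.
Proof.
apply/funext => i; apply/funext => k; rewrite /mm !fctE -big_split /=.
by apply: eq_bigr => j _; rewrite mulrDl.
Qed.

Lemma mmDr I J K (A : I -> J -> R) (B C : J -> K -> R) :
  mm A (B + C) = mm A B + mm A C.
Proof.
apply/funext => i; apply/funext => k; rewrite /mm !fctE -big_split /=.
by apply: eq_bigr => j _; rewrite mulrDr.
Qed.

Lemma mmBl I J K (A B : I -> J -> R) (C : J -> K -> R) :
  mm (A - B) C = mm A C - mm B C.
Proof.
apply/funext => i; apply/funext => k; rewrite /mm !fctE -sumrB.
by apply: eq_bigr => j _; rewrite mulrBl.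
Qed.

Lemma mmBr I J K (A : I -> J -> R) (B C : J -> K -> R) :
  mm A (B - C) = mm A B - mm A C.
Proof.
apply/funext => i; apply/funext => k; rewrite /mm !fctE -sumrB.
by apply: eq_bigr => j _; rewrite mulrBr.
Qed.

Lemma mm0l I J K (B : J -> K -> R) : mm (0 : I -> J -> R) B = 0.
Proof.
by apply/funext => i; apply/funext => k; rewrite /mm big1 // => j _; rewrite mul0r.
Qed.

Lemma mm1l I J (A : I -> J -> R) : mm (@idm I) A = A.
Proof.
apply/funext => i; apply/funext => j; rewrite /mm (bigD1 i) //= /idm eqxx mul1r.
by rewrite big1 ?addr0 // => k /negPf; rewrite eq_sym => ->; rewrite mul0r.
Qed.

Lemma mm1r I J (A : I -> J -> R) : mm A (@idm J) = A.
Proof.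
apply/funext => i; apply/funext => j; rewrite /mm (bigD1 j) //= /idm eqxx mulr1.
by rewrite big1 ?addr0 // => k /negPf ->; rewrite mulr0.
Qed.

Lemma trm_mm I J K (A : I -> J -> R) (B : J -> K -> R) :
  trm (mm A B) = mm (trm B) (trm A).
Proof.
apply/funext => k; apply/funext => i; rewrite /trm /mm.
by apply: eq_bigr => j _; rewrite mulrC.
Qed.

Lemma mmZl I J K (c : R) (A : I -> J -> R) (B : J -> K -> R) :
  mm (fun i j => c * A i j) B = fun i k => c * mm A B i k.
Proof.
apply/funext => i; apply/funext => k; rewrite /mm mulr_sumr.
by apply: eq_bigr => j _; rewrite mulrA.
Qed.

Lemma mmZr I J K (c : R) (A : I -> J -> R) (B : J -> K -> R) :
  mm A (fun j k => c * B j k) = fun i k => c * mm A B i k.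
Proof.
apply/funext => i; apply/funext => k; rewrite /mm mulr_sumr.
by apply: eq_bigr => j _; rewrite mulrCA.
Qed.

Lemma sumr_sqr_ge0 J (x : J -> R) : 0 <= \sum_j x j ^+ 2.
Proof. by apply: sumr_ge0 => j _; exact: sqr_ge0. Qed.

Lemma vnorm2_ge0 J (x : J -> R) : 0 <= vnorm2 x.
Proof. exact: sqrtr_ge0. Qed.

Lemma vnorm2_eq0 J (x : J -> R) : vnorm2 x = 0 -> x = 0.
Proof.
move/eqP; rewrite sqrtr_eq0 => x_le0; apply/funext => j.
have /psumr_eq0P x2_eq0 : \sum_j x j ^+ 2 = 0.
  by apply/le_anti; rewrite x_le0 sumr_sqr_ge0.
by apply/eqP; rewrite -sqrf_eq0 x2_eq0 // => i _; exact: sqr_ge0.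
Qed.

Lemma vnorm2Z J (a : R) (x : J -> R) :
  vnorm2 (fun j => a * x j) = `|a| * vnorm2 x.
Proof.
rewrite /vnorm2 -sqrtr_sqr -sqrtrM ?sqr_ge0 // mulr_sumr.
by congr Num.sqrt; apply: eq_bigr => j _; rewrite exprMn.
Qed.

Lemma vnorm2_delta J (b : J) : vnorm2 (fun j => (j == b)%:R : R) = 1.
Proof.
rewrite /vnorm2 (bigD1 b) //= eqxx expr1n big1 ?addr0 ?sqrtr1 //.
by move=> j /negPf ->; rewrite expr0n.
Qed.

(* Lagrange's identity: the sum of the squares (x_i y_j - x_j y_i)^2 is
   twice the Cauchy-Schwarz defect. *)
Lemma CauchySchwarz_sum J (x y : J -> R) :
  (\sum_j x j * y j) ^+ 2 <= (\sum_j x j ^+ 2) * (\sum_j y j ^+ 2).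
Proof.
have sum_mul (f g : J -> R) :
    (\sum_i f i) * (\sum_j g j) = \sum_i \sum_j f i * g j.
  by rewrite big_distrl; apply: eq_bigr => i _; rewrite big_distrr.
have lagrange : \sum_i \sum_j (x i * y j - x j * y i) ^+ 2 =
    2 * ((\sum_j x j ^+ 2) * (\sum_j y j ^+ 2) - (\sum_j x j * y j) ^+ 2).
  have sq i j : (x i * y j - x j * y i) ^+ 2 =
      x i ^+ 2 * y j ^+ 2 + x j ^+ 2 * y i ^+ 2 - 2 * (x i * y i) * (x j * y j).
    by ring.
  under eq_bigr do under eq_bigr do rewrite sq.
  under eq_bigr do rewrite sumrB big_split.
  rewrite sumrB big_split /= [X in _ + X - _]exchange_big /= -!sum_mul -mulr_sumr.
  by rewrite expr2; ring.
have : 0 <= \sum_i \sum_j (x i * y j - x j * y i) ^+ 2.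
  by apply: sumr_ge0 => i _; exact: sumr_sqr_ge0.
by rewrite lagrange pmulr_rge0 // subr_ge0.
Qed.

Lemma norm_sum_mul_le J (x y : J -> R) :
  `|\sum_j x j * y j| <= vnorm2 x * vnorm2 y.
Proof.
rewrite /vnorm2 -sqrtrM ?sumr_sqr_ge0 // -sqrtr_sqr ler_sqrt ?CauchySchwarz_sum //.
by rewrite mulr_ge0 ?sumr_sqr_ge0.
Qed.

Definition frob I J (M : I -> J -> R) : R := Num.sqrt (\sum_i \sum_j M i j ^+ 2).

Lemma vnorm2_mv_le_frob I J (M : I -> J -> R) (x : J -> R) :
  vnorm2 (mv M x) <= frob M * vnorm2 x.
Proof.
have M2_ge0 : 0 <= \sum_i \sum_j M i j ^+ 2.
  by apply: sumr_ge0 => i _; exact: sumr_sqr_ge0.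
rewrite /frob /vnorm2 -sqrtrM // ler_sqrt ?mulr_ge0 ?sumr_sqr_ge0 // mulr_suml.
by apply: ler_sum => i _; exact: CauchySchwarz_sum.
Qed.

Lemma opnorm_ubound I J (M : I -> J -> R) :
  ubound [set vnorm2 (mv M x) | x in [set x : J -> R | vnorm2 x <= 1]] (frob M).
Proof.
move=> _ [x /= x_le1 <-]; apply: le_trans (vnorm2_mv_le_frob M x) _.
by rewrite -[leRHS]mulr1 ler_wpM2l // sqrtr_ge0.
Qed.

Lemma opnorm_le_frob I J (M : I -> J -> R) : opnorm M <= frob M.
Proof.
apply: ge_sup; last exact: opnorm_ubound.
exists (vnorm2 (mv M 0)), 0 => //=.
by rewrite /vnorm2 big1 ?sqrtr0 // => j _; rewrite expr0n.
Qed.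

Lemma vnorm2_mv_le_opnorm I J (M : I -> J -> R) (x : J -> R) :
  vnorm2 x <= 1 -> vnorm2 (mv M x) <= opnorm M.
Proof.
move=> x_le1; apply: ub_le_sup; last by exists x.
by exists (frob M); exact: opnorm_ubound.
Qed.

Lemma vnorm2_mv_le I J (M : I -> J -> R) (x : J -> R) :
  vnorm2 (mv M x) <= opnorm M * vnorm2 x.
Proof.
have [x0|x_neq0] := eqVneq (vnorm2 x) 0.
  rewrite x0 mulr0 (vnorm2_eq0 x0) /vnorm2 big1 ?sqrtr0 // => i _.
  by rewrite /mv big1 ?expr0n // => j _; exact: mulr0.
have x_gt0 : 0 < vnorm2 x by rewrite lt_def x_neq0 vnorm2_ge0.
pose c := (vnorm2 x)^-1.
have : vnorm2 (mv M (fun j => c * x j)) <= opnorm M.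
  apply: vnorm2_mv_le_opnorm.
  by rewrite vnorm2Z ger0_norm ?invr_ge0 ?vnorm2_ge0 // mulVf.
have -> : mv M (fun j => c * x j) = fun i => c * mv M x i.
  by apply/funext => i; rewrite /mv mulr_sumr; apply: eq_bigr => j _; rewrite mulrCA.
by rewrite vnorm2Z ger0_norm ?invr_ge0 ?vnorm2_ge0 // mulrC ler_pdivrMr.
Qed.

Definition orthoproj I (P : I -> I -> R) := trm P = P /\ mm P P = P.

Lemma orthoproj_sum_sqr I (P : I -> I -> R) a :
  orthoproj P -> \sum_c P a c ^+ 2 = P a a.
Proof.
move=> [P_sym P_idem]; rewrite -{2}P_idem /mm; apply: eq_bigr => c _.
by rewrite expr2 -{2}P_sym.
Qed.

Lemma orthoprojC I (P : I -> I -> R) : orthoproj P -> orthoproj (@idm I - P).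
Proof.
move=> [P_sym P_idem]; split.
  apply/funext => i; apply/funext => j.
  by rewrite /trm !fctE /idm eq_sym -[in RHS]P_sym.
by rewrite mmBl !mmBr !mm1l mm1r P_idem subrr subr0.
Qed.

Lemma vnorm2_orthoproj_row_le1 I (P : I -> I -> R) a :
  orthoproj P -> vnorm2 (P a) <= 1.
Proof.
move=> P_proj; rewrite /vnorm2 -sqrtr1 ler_sqrt // orthoproj_sum_sqr //.
have := sumr_sqr_ge0 ((@idm I - P) a).
rewrite orthoproj_sum_sqr; last exact: orthoprojC.
by rewrite !fctE /= /idm eqxx subr_ge0.
Qed.

Lemma entry_le_orthoproj I J (P : I -> I -> R) (Q : J -> J -> R)
    (N : I -> J -> R) a b :
  orthoproj P -> orthoproj Q -> N = mm P N + mm (@idm I - P) (mm N Q) ->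
  opnorm N <= 1 -> `|N a b| <= vnorm2 (P a) + vnorm2 (fun d => Q d b).
Proof.
move=> P_proj Q_proj N_decomp N_le1.
rewrite {1}N_decomp.
apply: le_trans (ler_normD (mm P N a b) (mm (@idm I - P) (mm N Q) a b)) _.
apply: lerD.
  apply: le_trans (norm_sum_mul_le _ _) _.
  rewrite -[leRHS]mulr1 ler_wpM2l ?vnorm2_ge0 //.
  have -> : (fun c => N c b) = mv N (fun d => (d == b)%:R).
    apply/funext => c; rewrite /mv (bigD1 b) //= eqxx mulr1 big1 ?addr0 //.
    by move=> d /negPf ->; rewrite mulr0.
  apply: le_trans (vnorm2_mv_le _ _) _.
  by rewrite vnorm2_delta mulr1.
apply: le_trans (norm_sum_mul_le _ _) _.
rewrite -[leRHS]mul1r; apply: ler_pM; rewrite ?vnorm2_ge0 //.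
  exact/vnorm2_orthoproj_row_le1/orthoprojC.
apply: le_trans (vnorm2_mv_le N (fun d => Q d b)) _.
by rewrite -[leRHS]mul1r ler_wpM2r ?vnorm2_ge0.
Qed.

Lemma orthoproj_range I K (W : I -> K -> R) :
  mm (trm W) W = @idm K -> orthoproj (mm W (trm W)).
Proof.
move=> W_orth; split; first by rewrite trm_mm.
by rewrite mmA -[mm (trm W) _]mmA W_orth mm1l.
Qed.

Lemma tangent_decomp I J K (L : finType) (U : I -> K -> R) (V : J -> L -> R)
    (Y : J -> K -> R) (W : I -> L -> R) :
  mm (trm U) U = @idm K -> mm (trm V) V = @idm L ->
  let N := mm U (trm Y) + mm W (trm V) in
  N = mm (mm U (trm U)) N + mm (@idm I - mm U (trm U)) (mm N (mm V (trm V))).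
Proof.
move=> U_orth V_orth N.
have PU : mm (mm U (trm U)) U = U by rewrite mmA U_orth mm1r.
have NQ : mm N (mm V (trm V)) = mm U (mm (trm Y) (mm V (trm V))) + mm W (trm V).
  by rewrite /N mmDl !mmA -[mm (trm V) _]mmA V_orth mm1l.
rewrite NQ mmDr -mmA mmBl mm1l PU subrr mm0l add0r.
rewrite /N mmDr -mmA PU mmBl mm1l.
by rewrite -addrA [_ + (_ - _)]addrC addrNK.
Qed.

End FiniteMatrices.

Lemma osubE n (k j : 'I_n.+1) : osub k j = k - j.
Proof. by apply: val_inj => /=; rewrite modnDmr. Qed.

Lemma onegE n (k : 'I_n.+1) : oneg k = - k.
Proof. by apply: val_inj. Qed.

Lemma val_eq0 n (k : 'I_n.+1) : (val k == 0%N) = (k == 0).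
Proof. by rewrite -[0%N]/(val (0 : 'I_n.+1)) val_eqE. Qed.

Section BlockCirculant.
Variables (R : realType) (n : nat).
Local Notation n3 := n.+1.
Local Notation tensor := (tensor R).

Lemma bcirc_tprod n1 n2 n4 (A : tensor n1 n2 n3) (B : tensor n2 n4 n3) :
  bcirc (tprod A B) = mm (bcirc A) (bcirc B).
Proof.
apply/funext => p; apply/funext => q.
rewrite /bcirc /tprod /mm ffunE summxE.
rewrite -(pair_big xpredT xpredT
  (fun s m => A (osub p.1 s) p.2 m * B (osub s q.1) m q.2)) /=.
rewrite [RHS](reindex_inj (addIr q.1)) /=.
apply: eq_bigr => j _; rewrite mxE; apply: eq_bigr => m _.
by rewrite !osubE addrK opprD addrA [p.1 - j - q.1]addrAC.
Qed.

Lemma bcirc_ttr n1 n2 (A : tensor n1 n2 n3) : bcirc (ttr A) = trm (bcirc A).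
Proof.
apply/funext => p; apply/funext => q.
by rewrite /bcirc /ttr /trm ffunE mxE onegE !osubE opprB.
Qed.

Lemma bcirc_tid r : bcirc (tid R r n3) = @idm R _.
Proof.
apply/funext => -[p1 p2]; apply/funext => -[q1 q2].
rewrite /bcirc /tid /idm ffunE osubE val_eq0 subr_eq0 xpair_eqE /=.
by case: (p1 == q1); rewrite mxE.
Qed.

Lemma bcirc_tensorD n1 n2 (A B : tensor n1 n2 n3) :
  bcirc [ffun k => A k + B k] = bcirc A + bcirc B.
Proof. by apply/funext => p; apply/funext => q; rewrite !fctE /bcirc ffunE mxE. Qed.

Lemma bcirc_tensorZ n1 n2 (c : R) (A : tensor n1 n2 n3) :
  bcirc [ffun k => c *: A k] = fun p q => c * bcirc A p q.
Proof. by apply/funext => p; apply/funext => q; rewrite /bcirc ffunE mxE. Qed.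

Lemma bcirc_entry n1 n2 (A : tensor n1 n2 n3) k i j :
  A k i j = bcirc A (k, i) (0, j).
Proof. by rewrite /bcirc osubE subr0. Qed.

Lemma bcirc_col_shift n1 n2 (A : tensor n1 n2 n3) s j :
  \sum_p bcirc A p (s, j) ^+ 2 = \sum_p bcirc A p (0, j) ^+ 2.
Proof.
rewrite -!(pair_big xpredT xpredT (fun k i => bcirc A (k, i) _ ^+ 2)) /=.
rewrite (reindex_inj (addIr s)) /=.
by apply: eq_bigr => k _; apply: eq_bigr => i _; rewrite /bcirc !osubE addrK subr0.
Qed.

Definition colnorm n1 n2 (A : tensor n1 n2 n3) (j : 'I_n2) :=
  vnorm2 (fun p => bcirc A p (0, j)).

Lemma tfrob_tprod_ebasis N (A : tensor N N n3) (m : 'I_N) :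
  tfrob (tprod A (ebasis R n3 m)) = colnorm A m.
Proof.
rewrite /tfrob /colnorm /vnorm2.
rewrite -(pair_big xpredT xpredT (fun k i => bcirc A (k, i) _ ^+ 2)) /=.
congr Num.sqrt; apply: eq_bigr => k _; apply: eq_bigr => i _.
rewrite big_ord1 bcirc_entry bcirc_tprod /mm (bigD1 (0, m)) //= big1 ?addr0.
  by rewrite /bcirc /ebasis !osubE !subr0 ffunE /= mxE !eqxx mulr1.
move=> [s j] /=; rewrite /bcirc /ebasis !osubE !subr0 ffunE val_eq0.
have [->|_] := eqVneq s 0; last by rewrite mxE mulr0.
by rewrite mxE xpair_eqE eqxx /= => /negPf ->; rewrite mulr0.
Qed.

Lemma tspec_le1 n1 n2 (A : tensor n1 n2 n3) :
  \sum_p \sum_q bcirc A p q ^+ 2 <= 1 -> tspec A <= 1.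
Proof.
by move=> A_le1; apply: le_trans (opnorm_le_frob _) _; rewrite -sqrtr1 ler_sqrt.
Qed.

Lemma tinf_le n1 n2 (A : tensor n1 n2 n3) x :
  0 <= x -> (forall k i j, `|A k i j| <= x) -> tinf A <= x.
Proof.
move=> x_ge0 A_le; apply/bigmax_leP; split => // k _.
by apply/bigmax_leP; split => // i _; apply/bigmax_leP; split.
Qed.

Lemma le_tinf n1 n2 (A : tensor n1 n2 n3) k i j : `|A k i j| <= tinf A.
Proof.
apply: le_trans (le_bigmax _ _ k); apply: le_trans (le_bigmax _ _ i).
exact: (le_bigmax _ (fun j => `|A k i j|) j).
Qed.

Lemma beta_ge0 N r (U : tensor N r n3) : 0 <= beta U.
Proof. by apply/bigmax_geP; left. Qed.

Lemma colnorm_le_beta N r (U : tensor N r n3) j : colnorm (Defs.proj U) j <= beta U.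
Proof.
rewrite /beta -tfrob_tprod_ebasis.
exact: (le_bigmax 0 (fun i => tfrob (tprod (Defs.proj U) (ebasis R n3 i))) j).
Qed.

Lemma beta_le N r (U : tensor N r n3) x :
  0 <= x -> (forall j, colnorm (Defs.proj U) j <= x) -> beta U <= x.
Proof.
by move=> x_ge0 col_le; apply/bigmax_leP; split => // j _; rewrite tfrob_tprod_ebasis.
Qed.

Lemma bcirc_orth N r (U : tensor N r n3) :
  tprod (ttr U) U = tid R r n3 -> mm (trm (bcirc U)) (bcirc U) = @idm R _.
Proof. by move=> U_orth; rewrite -bcirc_ttr -bcirc_tprod U_orth bcirc_tid. Qed.

Lemma bcirc_proj N r (U : tensor N r n3) :
  bcirc (Defs.proj U) = mm (bcirc U) (trm (bcirc U)).
Proof. by rewrite /Defs.proj bcirc_tprod bcirc_ttr. Qed.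

Lemma orthoproj_bcirc_proj N r (U : tensor N r n3) :
  tprod (ttr U) U = tid R r n3 -> orthoproj (bcirc (Defs.proj U)).
Proof. by move=> U_orth; rewrite bcirc_proj; apply/orthoproj_range/bcirc_orth. Qed.

Lemma bcirc_proj_sym N r (U : tensor N r n3) p q :
  bcirc (Defs.proj U) p q = bcirc (Defs.proj U) q p.
Proof. by rewrite bcirc_proj /mm; apply: eq_bigr => k _; rewrite mulrC. Qed.

Lemma vnorm2_bcirc_proj_row N r (U : tensor N r n3) p :
  vnorm2 (bcirc (Defs.proj U) p) = colnorm (Defs.proj U) p.2.
Proof.
rewrite /colnorm /vnorm2 -(bcirc_col_shift _ p.1) -surjective_pairing.
by congr Num.sqrt; apply: eq_bigr => q _; rewrite bcirc_proj_sym.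
Qed.

Lemma bcirc_proj_diag N r (U : tensor N r n3) p :
  tprod (ttr U) U = tid R r n3 ->
  bcirc (Defs.proj U) p p = colnorm (Defs.proj U) p.2 ^+ 2.
Proof.
move=> U_orth; rewrite -vnorm2_bcirc_proj_row sqr_sqrtr ?sumr_sqr_ge0 //.
by rewrite orthoproj_sum_sqr //; exact: orthoproj_bcirc_proj.
Qed.

Definition tdelta n1 n2 (i : 'I_n1) (j : 'I_n2) : tensor n1 n2 n3 :=
  [ffun k : 'I_n3 => if val k == 0%N then delta_mx i j else 0].

Lemma bcirc_tdelta n1 n2 (i : 'I_n1) (j : 'I_n2) s i' q j' :
  bcirc (tdelta i j) (s, i') (q, j') = ((s == q) && (i' == i) && (j' == j))%:R.
Proof.
rewrite /bcirc osubE /tdelta ffunE val_eq0 subr_eq0.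
by case: (s == q); rewrite mxE.
Qed.

Lemma mm_bcirc_tdelta (I : finType) n1 n2 (M : I -> 'I_n3 * 'I_n1 -> R)
    (i : 'I_n1) (j : 'I_n2) p q :
  mm M (bcirc (tdelta i j)) p q = M p (q.1, i) * (q.2 == j)%:R.
Proof.
rewrite /mm (bigD1 (q.1, i)) //= big1 ?addr0.
  by case: q => q1 q2; rewrite bcirc_tdelta /= !eqxx.
case: q => q1 q2 [s i'] /=; rewrite xpair_eqE negb_and bcirc_tdelta.
by case/orP => /negPf ->; rewrite ?andbF mulr0.
Qed.

Lemma bcirc_tdelta_mm (J : finType) n1 n2 (M : 'I_n3 * 'I_n2 -> J -> R)
    (i : 'I_n1) (j : 'I_n2) p q :
  mm (bcirc (tdelta i j)) M p q = (p.2 == i)%:R * M (p.1, j) q.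
Proof.
rewrite /mm (bigD1 (p.1, j)) //= big1 ?addr0.
  by case: p => p1 p2; rewrite bcirc_tdelta /= !eqxx andbT mulrC.
case: p => p1 p2 [s j'] /=; rewrite xpair_eqE negb_and bcirc_tdelta.
by case/orP => /negPf; rewrite eq_sym => ->; rewrite ?andbF mul0r.
Qed.

Lemma tangent_tprodl N1 N2 r (U : tensor N1 r n3) (V : tensor N2 r n3)
    (Y : tensor N2 r n3) :
  tangent U V (tprod U (ttr Y)).
Proof.
exists Y, 0; apply/ffunP => k; rewrite ffunE [tprod 0 _ k]ffunE big1 ?addr0 //.
by move=> j _; rewrite ffunE mul0mx.
Qed.

Lemma tangent_tprodr N1 N2 r (U : tensor N1 r n3) (V : tensor N2 r n3)
    (W : tensor N1 r n3) :
  tangent U V (tprod W (ttr V)).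
Proof.
exists 0, W; apply/ffunP => k; rewrite ffunE [tprod U _ k]ffunE big1 ?add0r //.
by move=> j _; rewrite ffunE ffunE trmx0 mulmx0.
Qed.

Definition witness_scale N (P : tensor N N n3) (a : 'I_N) : R :=
  (Num.sqrt n3%:R * colnorm P a)^-1.

Lemma witness_scale_colnorm N (P : tensor N N n3) a :
  witness_scale P a * colnorm P a ^+ 2 = colnorm P a / Num.sqrt n3%:R.
Proof.
rewrite /witness_scale; have [->|c_neq0] := eqVneq (colnorm P a) 0.
  by rewrite expr0n !mulr0 mul0r.
by rewrite invfM expr2 mulrCA !mulrA divfK.
Qed.

Lemma sum_bcirc_col_sqr n1 n2 (A : tensor n1 n2 n3) s j :
  \sum_p bcirc A p (s, j) ^+ 2 = colnorm A j ^+ 2.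
Proof. by rewrite bcirc_col_shift sqr_sqrtr ?sumr_sqr_ge0. Qed.

Lemma witness_sum_sqr_le1 N (P : tensor N N n3) a (J : finType) (b : J) :
  \sum_p \sum_(q : 'I_n3 * J)
     (witness_scale P a * (bcirc P p (q.1, a) * (q.2 == b)%:R)) ^+ 2 <= 1.
Proof.
set c := witness_scale P a.
rewrite (eq_bigr (fun p => \sum_(q < n3) (c * bcirc P p (q, a)) ^+ 2)); last first.
  move=> p _; rewrite -(pair_big xpredT xpredT
    (fun q1 q2 => (c * (bcirc P p (q1, a) * (q2 == b)%:R)) ^+ 2)) /=.
  apply: eq_bigr => q _; rewrite (bigD1 b) //= eqxx mulr1 big1 ?addr0 //.
  by move=> j /negPf ->; rewrite !mulr0 expr0n.
rewrite exchange_big /=.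
under eq_bigr do under eq_bigr do rewrite exprMn.
under eq_bigr do rewrite -mulr_sumr sum_bcirc_col_sqr.
rewrite sumr_const card_ord -mulrnAr -mulr_natl -[n3%:R]sqr_sqrtr ?ler0n //.
rewrite -!exprMn /c /witness_scale.
have [->|sc_neq0] := eqVneq (Num.sqrt n3%:R * colnorm P a) 0.
  by rewrite mulr0 expr0n ler01.
by rewrite mulVf // expr1n.
Qed.

End BlockCirculant.

Section TangentBounds.
Variables (R : realType) (n N1 N2 r : nat).
Local Notation n3 := n.+1.
Variables (U : tensor R N1 r n3) (V : tensor R N2 r n3).
Hypothesis U_orth : tprod (ttr U) U = tid R r n3.
Hypothesis V_orth : tprod (ttr V) V = tid R r n3.

Lemma tinf_tangent_le (Nt : tensor R N1 N2 n3) :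
  tangent U V Nt -> tspec Nt <= 1 -> tinf Nt <= beta U + beta V.
Proof.
move=> [Y [W ->]]; rewrite /tspec bcirc_tensorD !bcirc_tprod !bcirc_ttr => Nt_le1.
apply: tinf_le => [|k i j]; first by rewrite addr_ge0 ?beta_ge0.
rewrite bcirc_entry bcirc_tensorD !bcirc_tprod !bcirc_ttr.
have bU_orth := bcirc_orth U_orth; have bV_orth := bcirc_orth V_orth.
apply: le_trans (entry_le_orthoproj _ _ (orthoproj_range bU_orth)
  (orthoproj_range bV_orth) (tangent_decomp _ _ bU_orth bV_orth) Nt_le1) _.
rewrite -!bcirc_proj vnorm2_bcirc_proj_row.
by apply: lerD; apply: colnorm_le_beta.
Qed.

Lemma tangent_witness_left (a : 'I_N1) (b : 'I_N2) : exists Nt,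
  [/\ tangent U V Nt, tspec Nt <= 1 &
      colnorm (Defs.proj U) a / Num.sqrt n3%:R <= tinf Nt].
Proof.
set c := witness_scale (Defs.proj U) a.
pose Z : tensor R r N2 n3 := [ffun k => c *: tprod (ttr U) (tdelta R n a b) k].
have bcircE : bcirc (tprod U (ttr (ttr Z))) =
    fun p q => c * (bcirc (Defs.proj U) p (q.1, a) * (q.2 == b)%:R).
  rewrite bcirc_tprod !bcirc_ttr bcirc_tensorZ bcirc_tprod bcirc_ttr mmZr.
  rewrite -mmA -bcirc_proj.
  by apply/funext => p; apply/funext => q; rewrite mm_bcirc_tdelta.
exists (tprod U (ttr (ttr Z))); split; first exact: tangent_tprodl.
  by apply: tspec_le1; rewrite bcircE; exact: witness_sum_sqr_le1.
apply: le_trans (le_tinf _ 0 a b).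
rewrite bcirc_entry bcircE /= eqxx mulr1 bcirc_proj_diag // witness_scale_colnorm.
by rewrite ger0_norm // divr_ge0 ?sqrtr_ge0.
Qed.

Lemma tangent_witness_right (a : 'I_N2) (b : 'I_N1) : exists Nt,
  [/\ tangent U V Nt, tspec Nt <= 1 &
      colnorm (Defs.proj V) a / Num.sqrt n3%:R <= tinf Nt].
Proof.
set c := witness_scale (Defs.proj V) a.
pose W : tensor R N1 r n3 := [ffun k => c *: tprod (tdelta R n b a) V k].
have bcircE : bcirc (tprod W (ttr V)) =
    fun p q => c * (bcirc (Defs.proj V) q (p.1, a) * (p.2 == b)%:R).
  rewrite bcirc_tprod bcirc_ttr bcirc_tensorZ bcirc_tprod mmZl mmA -bcirc_proj.
  apply/funext => p; apply/funext => q.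
  by rewrite bcirc_tdelta_mm bcirc_proj_sym [_ * (_ == _)%:R]mulrC.
exists (tprod W (ttr V)); split; first exact: tangent_tprodr.
  by apply: tspec_le1; rewrite bcircE exchange_big; exact: witness_sum_sqr_le1.
apply: le_trans (le_tinf _ 0 b a).
rewrite bcirc_entry bcircE /= eqxx mulr1 bcirc_proj_diag // witness_scale_colnorm.
by rewrite ger0_norm // divr_ge0 ?sqrtr_ge0.
Qed.

Lemma tinf_le_xi (Nt : tensor R N1 N2 n3) :
  tangent U V Nt -> tspec Nt <= 1 -> tinf Nt <= xi U V.
Proof.
move=> Nt_tan Nt_le1; apply: ub_le_sup; last by exists Nt.
by exists (beta U + beta V) => _ [M [M_tan M_le1] <-]; exact: tinf_tangent_le.
Qed.

Lemma colnorm_left_le_xi (a : 'I_N1) (b : 'I_N2) :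
  colnorm (Defs.proj U) a / Num.sqrt n3%:R <= xi U V.
Proof.
have [Nt [Nt_tan Nt_le1 col_le]] := tangent_witness_left a b.
by apply: le_trans col_le _; exact: tinf_le_xi.
Qed.

Lemma colnorm_right_le_xi (a : 'I_N2) (b : 'I_N1) :
  colnorm (Defs.proj V) a / Num.sqrt n3%:R <= xi U V.
Proof.
have [Nt [Nt_tan Nt_le1 col_le]] := tangent_witness_right a b.
by apply: le_trans col_le _; exact: tinf_le_xi.
Qed.

Lemma xi_le_beta (a : 'I_N1) (b : 'I_N2) : xi U V <= beta U + beta V.
Proof.
apply: ge_sup.
  have [Nt [Nt_tan Nt_le1 _]] := tangent_witness_left a b.
  by exists (tinf Nt), Nt.
by move=> _ [Nt [Nt_tan Nt_le1] <-]; exact: tinf_tangent_le.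
Qed.

End TangentBounds.

Theorem lemma3 (R : realType) (N1 N2 N3 r : nat)
  (L : tensor R N1 N2 N3) (U : tensor R N1 r N3) (S : tensor R r r N3)
  (V : tensor R N2 r N3) :
  (0 < N1)%N -> (0 < N2)%N -> (0 < N3)%N ->
  L = tprod (tprod U S) (ttr V) ->
  tprod (ttr U) U = tid R r N3 ->
  tprod (ttr V) V = tid R r N3 ->
  fdiag S ->
  inc U V / Num.sqrt (N3%:R) <= xi U V /\ xi U V <= 2 * inc U V.
Proof.
move=> N1_gt0 N2_gt0 N3_gt0 _ U_orth V_orth _.
case: N3 N3_gt0 => [//|n] _ in L U S V U_orth V_orth *.
pose a0 := Ordinal N1_gt0; pose b0 := Ordinal N2_gt0.
have s_gt0 : 0 < Num.sqrt (n.+1%:R : R) by rewrite sqrtr_gt0 ltr0Sn.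
have xi_ge0 : 0 <= xi U V.
  apply: le_trans (colnorm_left_le_xi U_orth V_orth a0 b0).
  by rewrite divr_ge0 ?sqrtr_ge0.
split.
  rewrite ler_pdivrMr // ge_max.
  apply/andP; split; apply: beta_le => [|j]; rewrite ?mulr_ge0 ?(ltW s_gt0) //.
    by rewrite -ler_pdivrMr //; exact: colnorm_left_le_xi b0.
  by rewrite -ler_pdivrMr //; exact: colnorm_right_le_xi a0.
apply: le_trans (xi_le_beta U_orth V_orth a0 b0) _.
by rewrite mulr_natl mulr2n; apply: lerD; rewrite le_max lexx ?orbT.
Qed.
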